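(* Let $\tau\ge\tfrac32$. For every family of probability distributions $\{p(a,b|x,y)\}_{a,b,x,y\in\{0,1\}}$ satisfying the no-signaling conditions (i.e. the marginals $p_A(a|x)=\sum_b p(a,b|x,y)$ are independent of $y$ and $p_B(b|y)=\sum_a p(a,b|x,y)$ are independent of $x$), in particular for all distributions arising from quantum states and local measurements, one has $S^{(\tau)}=p(0,0|0,0)-p(0,0|1,1)+(1-\tau)[p(0,0|0,1)+p(0,0|1,0)]-\tau[p(0,1|0,1)+p(1,0|1,0)]\le 0.$
   Context: $p(a,b|x,y)$ denotes the joint probability of outcomes $a,b\in\{0,1\}$ for Alice and Bob given their measurement settings $x,y\in\{0,1\}$; each $p(\cdot,\cdot|x,y)$ is a probability distribution on $\{0,1\}^2$. *)

(* real numbers. Outcomes and settings in {0,1} are encoded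
   as bool, with false = 0 and true = 1. *)
From Stdlib Require Import Reals Lra.
Open Scope R_scope.

(* A behaviour (correlation): p a b x y = p(a,b|x,y). *)
Definition behaviour := bool -> bool -> bool -> bool -> R.

Definition is_prob_family (p : behaviour) : Prop :=
  (forall a b x y, 0 <= p a b x y) /\
  (forall x y, p false false x y + p false true x y
             + p true false x y + p true true x y = 1).

Definition margA (p : behaviour) (a x y : bool) : R :=
  p a false x y + p a true x y.

Definition margB (p : behaviour) (b x y : bool) : R :=
  p false b x y + p true b x y.

Definition no_signaling (p : behaviour) : Prop :=
  (forall a x y y', margA p a x y = margA p a x y') /\
  (forall b x x' y, margB p b x y = margB p b x' y).

Definition S_tau (tau : R) (p : behaviour) : R :=
  p false false false false - p false false true true
  + (1 - tau) * (p false false false true + p false false true false)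
  - tau * (p false true false true + p true false true false).

(* For tau = 3/2 the expression is controlled by no-signaling alone: p(0,0|0,0)
   is bounded both by Alice's marginal p_A(0|0), read off with y = 1, and by
   Bob's marginal p_B(0|0), read off with x = 1, hence by their mean; this mean
   is exactly what the negative terms of S^(3/2) subtract. Increasing tau only
   subtracts a further nonnegative multiple of the same four probabilities. *)
From Stdlib Require Import Reals Lra.
Open Scope R_scope.

Section Behaviour.

Variable p : behaviour.
Hypothesis p_ge0 : forall a b x y, 0 <= p a b x y.

Lemma le_margA (a b x y : bool) : p a b x y <= margA p a x y.
Proof. unfold margA; pose proof (p_ge0 a (negb b) x y); destruct b; simpl in *; lra. Qed.

Lemma le_margB (a b x y : bool) : p a b x y <= margB p b x y.
Proof. unfold margB; pose proof (p_ge0 (negb a) b x y); destruct a; simpl in *; lra. Qed.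

Lemma twice_p0000_le_marginals :
  no_signaling p ->
  2 * p false false false false
    <= margA p false false true + margB p false true false.
Proof.
  intros [HA HB].
  rewrite <- (HA false false false true), <- (HB false false true false).
  pose proof (le_margA false false false false).
  pose proof (le_margB false false false false).
  lra.
Qed.

Lemma S_tau_antitone (tau1 tau2 : R) :
  tau1 <= tau2 -> S_tau tau2 p <= S_tau tau1 p.
Proof.
  intros Hle.
  set (w := p false false false true + p false false true false
            + p false true false true + p true false true false).
  assert (Hw : 0 <= w).
  { unfold w.
    pose proof (p_ge0 false false false true); pose proof (p_ge0 false false true false);
    pose proof (p_ge0 false true false true); pose proof (p_ge0 true false true false).
    lra. }
  assert (Hdiff : S_tau tau1 p - S_tau tau2 p = (tau2 - tau1) * w)
    by (unfold S_tau, w; ring).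
  pose proof (Rmult_le_pos (tau2 - tau1) w ltac:(lra) Hw).
  lra.
Qed.

Lemma S_tau_three_halves_nonpos : no_signaling p -> S_tau (3 / 2) p <= 0.
Proof.
  intros Hns.
  pose proof (twice_p0000_le_marginals Hns) as Hmean.
  pose proof (p_ge0 false false true true).
  pose proof (p_ge0 false true false true); pose proof (p_ge0 true false true false).
  unfold S_tau, margA, margB in *.
  lra.
Qed.

End Behaviour.

Theorem mainTheorem2 (tau : R) (p : behaviour) :
  3 / 2 <= tau -> is_prob_family p -> no_signaling p -> S_tau tau p <= 0.
Proof.
  intros Htau [p_ge0 _] Hns.
  apply Rle_trans with (S_tau (3 / 2) p).
  - exact (S_tau_antitone p p_ge0 _ _ Htau).
  - exact (S_tau_three_halves_nonpos p p_ge0 Hns).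
Qed.
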